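(* Assume (A), $c_1\ge c_1^F$, that $v$ is differentiable on $[0,\infty)$ (one-sided at $0$) with $v'(0)=0$, and let $t^*:=t^F_{c_2}$. Define the input-rate path (the derivative on $(-t^*,0)$ of the most probable path $f^*(r)=-\frac{\Gamma(-r,t^* )}{v(t^* )}(b+c_2t^* )$) $$g^*(r):=\frac{b+c_2t^*}{2v(t^* )}\big(v'(r+t^* )+v'(-r)\big),\qquad r\in[-t^*,0].$$ Then $g^*(0)=g^*(-t^* )=c_2$.
   Context: $v:[0,\infty)\to[0,\infty)$ is continuous, $v(0)=0$, $\lim_{t\to\infty}v(t)/t^\alpha=0$ for some $\alpha<2$, the variance function of a centered Gaussian process with stationary increments; $\Gamma(s,t):=\tfrac12(v(|s|)+v(|t|)-v(|t-s|))$. Fix $b>0$, $c_1>c_2>0$. $L_c(t):=(b+ct)^2/(2v(t))$; $t^F_{c_2}$ is a minimizer of $L_{c_2}$ over $t>0$; $k(s,t):=\frac{\Gamma(s,t)}{v(t)}(b+c_2t)$; $c_1^F:=\sup_{s\in(0,t^F_{c_2})}k(s,t^F_{c_2})/s$. Assumption (A): $\sqrt v\in C^2([0,\infty))$, strictly increasing and strictly concave. *)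

From Stdlib Require Import Reals Lra.
From Coquelicot Require Import Coquelicot.
Open Scope R_scope.

Definition nonneg (x : R) : Prop := 0 <= x.

Definition cont_nonneg (f : R -> R) : Prop :=
  forall t, 0 <= t -> filterlim f (within nonneg (locally t)) (locally (f t)).

Definition deriv_nonneg (f f' : R -> R) : Prop :=
  forall t, 0 <= t ->
    filterlim (fun h => (f (t + h) - f t) / h)
      (within (fun h => h <> 0 /\ 0 <= t + h) (locally 0)) (locally (f' t)).

Definition C2_nonneg (f : R -> R) : Prop :=
  exists f1 f2 : R -> R,
    deriv_nonneg f f1 /\ deriv_nonneg f1 f2 /\ cont_nonneg f2.

Definition strict_incr_nonneg (f : R -> R) : Prop :=
  forall s t, 0 <= s -> s < t -> f s < f t.

Definition strict_concave_nonneg (f : R -> R) : Prop :=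
  forall s t l, 0 <= s -> 0 <= t -> s <> t -> 0 < l < 1 ->
    l * f s + (1 - l) * f t < f (l * s + (1 - l) * t).

Definition Gamma (v : R -> R) (s t : R) : R :=
  (v (Rabs s) + v (Rabs t) - v (Rabs (t - s))) / 2.

(* v is the variance function of a centered Gaussian process with stationary
   increments, i.e. Gamma is a covariance kernel (positive semidefinite);
   such a process exists iff this holds (Kolmogorov extension). *)
Definition is_gauss_si_variance (v : R -> R) : Prop :=
  forall (n : nat) (ts a : nat -> R),
    0 <= sum_f_R0 (fun i => sum_f_R0 (fun j => a i * a j * Gamma v (ts i) (ts j)) n) n.

Definition standing_v (v : R -> R) : Prop :=
  cont_nonneg v /\ (forall t, 0 <= t -> 0 <= v t) /\ v 0 = 0 /\
  (exists alpha, alpha < 2 /\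
     is_lim (fun t => v t / Rpower t alpha) p_infty 0) /\
  is_gauss_si_variance v.

Definition assumption_A (v : R -> R) : Prop :=
  let w := fun t => sqrt (v t) in
  C2_nonneg w /\ strict_incr_nonneg w /\ strict_concave_nonneg w.

Definition Lc (v : R -> R) (b c t : R) : R := (b + c * t) ^ 2 / (2 * v t).

Definition is_tF (v : R -> R) (b c t : R) : Prop :=
  0 < t /\ forall s, 0 < s -> Lc v b c t <= Lc v b c s.

Definition kfun (v : R -> R) (b c2 s t : R) : R := Gamma v s t / v t * (b + c2 * t).

Definition c1F (v : R -> R) (b c2 t : R) : Rbar :=
  Lub_Rbar (fun x => exists s, 0 < s < t /\ x = kfun v b c2 s t / s).

Definition gstar (v dv : R -> R) (b c2 t r : R) : R :=
  (b + c2 * t) / (2 * v t) * (dv (r + t) + dv (- r)).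

(** At an interior minimiser [t] of [L_c(t) = (b + c t)^2 / (2 v t)] the
    derivative vanishes, i.e. [(b + c t) v'(t) = 2 c v(t)].  Since [v'(0) = 0],
    both endpoint values of [g*] reduce to [(b + c t) v'(t) / (2 v(t))], which
    is therefore [c]. *)

From Stdlib Require Import Reals Lra.
From Coquelicot Require Import Coquelicot.
Open Scope R_scope.

Lemma is_derive_deriv_nonneg (f f' : R -> R) (t : R) :
  deriv_nonneg f f' -> 0 < t -> is_derive f t (f' t).
Proof.
  intros Hd Ht; apply is_derive_Reals; intros eps Heps.
  destruct (Hd t (Rlt_le _ _ Ht) _ (locally_ball (f' t) (mkposreal _ Heps)))
    as [d Hd'].
  assert (Hdt : 0 < Rmin d t) by (apply Rmin_pos; [apply cond_pos | lra]).
  exists (mkposreal _ Hdt); simpl; intros h Hh0 Hh.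
  pose proof (Rmin_l d t); pose proof (Rmin_r d t).
  apply Hd'.
  - change (Rabs (h - 0) < d); rewrite Rminus_0_r; lra.
  - split; [exact Hh0|]; apply Rabs_def2 in Hh; lra.
Qed.

Lemma is_derive_min_eq0 (f : R -> R) (t l : R) :
  0 < t -> (forall s, 0 < s -> f t <= f s) -> is_derive f t l -> l = 0.
Proof.
  intros Ht Hmin Hd; apply is_derive_Reals in Hd.
  change l with (derive_pt f t (exist _ l Hd)).
  apply (deriv_minimum f 0 (t + 1)); [lra | lra |].
  intros s Hs _; apply Hmin; exact Hs.
Qed.

Lemma is_derive_Lc (v : R -> R) (b c t d : R) :
  is_derive v t d -> v t <> 0 ->
  is_derive (Lc v b c) t
    ((b + c * t) * (2 * c * v t - (b + c * t) * d) / (2 * v t ^ 2)).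
Proof.
  intros Hv Hv0.
  replace ((b + c * t) * (2 * c * v t - (b + c * t) * d) / (2 * v t ^ 2))
    with ((2 * c * (b + c * t) * (2 * v t) - (b + c * t) ^ 2 * (2 * d))
          / (2 * v t) ^ 2) by (field; exact Hv0).
  apply (is_derive_div (fun s => (b + c * s) ^ 2) (fun s => 2 * v s));
    [| now apply @is_derive_scal | lra].
  auto_derive; [exact I | ring].
Qed.

Lemma is_tF_first_order (v : R -> R) (b c t d : R) :
  is_tF v b c t -> 0 < v t -> 0 < b + c * t -> is_derive v t d ->
  (b + c * t) * d = 2 * c * v t.
Proof.
  intros [Ht Hmin] Hvt Hbct Hv.
  assert (Hvt0 : v t <> 0) by lra.
  pose proof (is_derive_min_eq0 _ _ _ Ht Hmin (is_derive_Lc v b c t d Hv Hvt0))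
    as Hcrit.
  assert (Hden : 0 < 2 * v t ^ 2) by (pose proof (pow_lt _ 2 Hvt); lra).
  apply Rmult_integral in Hcrit as [Hnum | Hinv];
    [| pose proof (Rinv_0_lt_compat _ Hden); lra].
  apply Rmult_integral in Hnum as [|]; lra.
Qed.

Lemma sqrt_strict_incr_pos (v : R -> R) (t : R) :
  strict_incr_nonneg (fun s => sqrt (v s)) -> v 0 = 0 -> 0 < t -> 0 < v t.
Proof.
  intros Hinc Hv0 Ht.
  specialize (Hinc 0 t (Rle_refl 0) Ht); cbv beta in Hinc.
  rewrite Hv0, sqrt_0 in Hinc.
  destruct (Rle_or_lt (v t) 0) as [Hle | Hlt]; [| exact Hlt].
  rewrite (sqrt_neg_0 _ Hle) in Hinc; lra.
Qed.

Lemma gstar_0 (v dv : R -> R) (b c t : R) :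
  dv 0 = 0 -> gstar v dv b c t 0 = (b + c * t) / (2 * v t) * dv t.
Proof.
  intros Hd0; unfold gstar.
  now rewrite Rplus_0_l, Ropp_0, Hd0, Rplus_0_r.
Qed.

Lemma gstar_opp (v dv : R -> R) (b c t : R) :
  dv 0 = 0 -> gstar v dv b c t (- t) = (b + c * t) / (2 * v t) * dv t.
Proof.
  intros Hd0; unfold gstar.
  now rewrite Rplus_opp_l, Ropp_involutive, Hd0, Rplus_0_l.
Qed.

Theorem proposition3p13 (v dv : R -> R) (b c1 c2 tstar : R) :
  standing_v v ->
  0 < b -> c2 < c1 -> 0 < c2 ->
  assumption_A v ->
  is_tF v b c2 tstar ->
  Rbar_le (c1F v b c2 tstar) (Finite c1) ->
  deriv_nonneg v dv -> dv 0 = 0 ->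
  gstar v dv b c2 tstar 0 = c2 /\ gstar v dv b c2 tstar (- tstar) = c2.
Proof.
  intros (_ & _ & Hv0 & _) Hb _ Hc2 (_ & Hinc & _) Hmin _ Hd Hd0.
  pose proof (proj1 Hmin) as Ht.
  assert (Hvt : 0 < v tstar) by exact (sqrt_strict_incr_pos v tstar Hinc Hv0 Ht).
  assert (Hbct : 0 < b + c2 * tstar) by nra.
  pose proof (is_tF_first_order v b c2 tstar (dv tstar) Hmin Hvt Hbct
                (is_derive_deriv_nonneg v dv tstar Hd Ht)) as Hfoc.
  assert (Hg : (b + c2 * tstar) / (2 * v tstar) * dv tstar = c2).
  { replace ((b + c2 * tstar) / (2 * v tstar) * dv tstar)
      with ((b + c2 * tstar) * dv tstar / (2 * v tstar)) by (field; lra).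
    rewrite Hfoc; field; lra. }
  rewrite gstar_0, gstar_opp by exact Hd0.
  split; exact Hg.
Qed.
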